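(* Let $P$ be a finite poset and $t\geq 2$, $n\geq 1$ integers. Suppose $\mathcal{F}\subseteq[t]^n$ is induced $P$-saturated and $i\in[n]$ is not separating for $\mathcal{F}$. Then there exists an induced $P$-saturated family $\mathcal{F}'\subseteq[t]^n$ with $|\mathcal{F}'|=|\mathcal{F}|$ such that $f(i)\in\{1,t\}$ for all $f\in\mathcal{F}'$.
   Context: $[n]=\{1,\dots,n\}$; $[t]^n$ is the set of functions $f:[n]\to[t]$ ordered by $f\leq g$ iff $f(j)\leq g(j)$ for all $j$. An induced copy of $P$ in $\mathcal{F}\subseteq[t]^n$ is an injective map $\phi:P\to\mathcal{F}$ with $\phi(x)\leq\phi(y)$ iff $x\leq_P y$. $\mathcal{F}$ is induced $P$-saturated if it contains no induced copy of $P$ and for every $f\in[t]^n\setminus\mathcal{F}$, $\mathcal{F}\cup\{f\}$ contains an induced copy of $P$. For $f\in[t]^n$, $D_i(f)\in[t]^{n-1}$ is given by $D_i(f)(x)=f(x)$ for $x<i$ and $D_i(f)(x)=f(x+1)$ for $i\leq x\leq n-1$. Coordinate $i$ is separating for $\mathcal{F}$ if there exist distinct $f,f'\in\mathcal{F}$ with $D_i(f)\leq D_i(f')$ and $f(i)>f'(i)$. *)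

From mathcomp Require Import all_boot all_order.
Set Warnings "-notation-overridden".
Set Implicit Arguments. Unset Strict Implicit. Unset Printing Implicit Defensive.
Import Order.TTheory.

(* [t]^n is modelled as {ffun 'I_n -> 'I_t}: coordinate j+1 of the paper is
   index j : 'I_n, and value k+1 of the paper is k : 'I_t (so 1 ~ 0, t ~ t-1). *)
Definition grid (t n : nat) := {ffun 'I_n -> 'I_t}.

Definition gle (t n : nat) (f g : grid t n) : bool := [forall j, f j <= g j].

Definition induced_copy (d : Order.disp_t) (P : finPOrderType d) (t n : nat)
    (F : {set grid t n}) (phi : P -> grid t n) : Prop :=
  injective phi /\ (forall x, phi x \in F) /\
  (forall x y : P, gle (phi x) (phi y) = (x <= y)%O).

Definition contains_induced (d : Order.disp_t) (P : finPOrderType d) (t n : nat)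
    (F : {set grid t n}) : Prop :=
  exists phi : P -> grid t n, @induced_copy d P t n F phi.

Definition induced_saturated (d : Order.disp_t) (P : finPOrderType d) (t n : nat)
    (F : {set grid t n}) : Prop :=
  ~ @contains_induced d P t n F /\
  forall f : grid t n, f \notin F -> @contains_induced d P t n (f |: F).

Definition Dle (t n : nat) (i : 'I_n) (f g : grid t n) : bool :=
  [forall j, (j != i) ==> (f j <= g j)].

Definition separating (t n : nat) (F : {set grid t n}) (i : 'I_n) : Prop :=
  exists f f', [/\ f \in F, f' \in F, f != f', Dle i f f' & (f' i < f i)%N].

(* Squashing coordinate i (value 1 stays, every larger value becomes t) is
   monotone, and when i is not separating it also reflects the order on F:
   for f, g in F with D_i(f) <= D_i(g) we already have f(i) <= g(i).  So the
   squashed family is an order-isomorphic copy of F and contains no induced P.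
   For saturation, a function h outside the squashed family is matched with an
   h' outside F that agrees with h off coordinate i and compares with each f in
   F exactly as h compares with the squash of f; an induced P in F + h' then
   transfers to the squashed family + h.  The value h'(i) is a threshold, which
   exists because the functions of F below h off i take values at i no larger
   than those of the functions of F above h off i. *)
From mathcomp Require Import all_boot all_order.
Set Implicit Arguments. Unset Strict Implicit. Unset Printing Implicit Defensive.
Import Order.POrderTheory.

Section GridOrder.
Variables t n : nat.
Implicit Types f g h : grid t n.

Lemma gle_refl f : gle f f.
Proof. by apply/forallP. Qed.

Lemma gle_anti f g : gle f g -> gle g f -> f = g.
Proof.
move=> /forallP fg /forallP gf; apply/ffunP => j.
by apply/val_inj/anti_leq; rewrite fg gf.
Qed.

Lemma gle_Dle (i : 'I_n) f g : gle f g = Dle i f g && (f i <= g i).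
Proof.
apply/forallP/andP => [fg | [/forallP fg gi] j].
  by split=> //; apply/forallP => j; apply/implyP.
by case: (eqVneq j i) => [-> // | /(implyP (fg j))].
Qed.

Lemma Dle_trans (i : 'I_n) f g h : Dle i f g -> Dle i g h -> Dle i f h.
Proof.
move=> /forallP fg /forallP gh; apply/forallP => j; apply/implyP => ji.
exact: leq_trans (implyP (fg j) ji) (implyP (gh j) ji).
Qed.

Lemma nonseparating_le (F : {set grid t n}) (i : 'I_n) f g :
  ~ separating F i -> f \in F -> g \in F -> Dle i f g -> f i <= g i.
Proof.
move=> nsep fF gF fg; have [-> // | neq] := eqVneq f g.
by rewrite leqNgt; apply/negP => gf; apply: nsep; exists f, g.
Qed.

End GridOrder.

Section InducedCopies.
Variables (d : Order.disp_t) (P : finPOrderType d) (t n : nat).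

Lemma induced_copy_gle (F : {set grid t n}) (phi : P -> grid t n) :
  (forall x, phi x \in F) -> (forall x y, gle (phi x) (phi y) = (x <= y)%O) ->
  induced_copy F phi.
Proof.
move=> phiF phi_gle; split=> // x y eq_phi.
by apply/le_anti; rewrite -!phi_gle eq_phi gle_refl.
Qed.

Lemma contains_induced_transfer (A B : {set grid t n}) (psi : grid t n -> grid t n) :
  {in A, forall f, psi f \in B} ->
  {in A &, forall f g, gle (psi f) (psi g) = gle f g} ->
  contains_induced P A -> contains_induced P B.
Proof.
move=> psiB psi_gle [phi [_ [phiA phi_gle]]]; exists (psi \o phi).
by apply: induced_copy_gle => [x | x y] /=; rewrite ?psi_gle ?psiB.
Qed.

Variables (F : {set grid t n}) (sigma : grid t n -> grid t n).
Hypothesis sigma_gle : {in F &, forall f g, gle (sigma f) (sigma g) = gle f g}.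

Lemma card_imset_gle : #|sigma @: F| = #|F|.
Proof.
apply: card_in_imset => f g fF gF eq_sigma.
by apply: gle_anti; rewrite -sigma_gle // eq_sigma gle_refl.
Qed.

Lemma contains_induced_imset_gle :
  contains_induced P (sigma @: F) -> contains_induced P F.
Proof.
pose preim g := odflt g [pick f in F | sigma f == g].
have preimK f : f \in F -> preim (sigma f) = f.
  move=> fF; rewrite /preim; case: pickP => [g /andP[gF /eqP eq_sigma] | /(_ f)].
    by apply: gle_anti; rewrite -sigma_gle // eq_sigma gle_refl.
  by rewrite fF eqxx.
apply: (contains_induced_transfer (psi := preim)).
  by move=> _ /imsetP[f fF ->]; rewrite preimK.
by move=> _ _ /imsetP[f fF ->] /imsetP[g gF ->]; rewrite !preimK // sigma_gle.
Qed.

Hypothesis sigma_extend : forall h, h \notin sigma @: F ->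
  exists2 h', h' \notin F &
    {in F, forall f, gle h (sigma f) = gle h' f /\ gle (sigma f) h = gle f h'}.

Lemma induced_saturated_imset :
  induced_saturated P F -> induced_saturated P (sigma @: F).
Proof.
move=> [noP satF]; split; first by move/contains_induced_imset_gle.
move=> h hF; have [h' h'F h'_gle] := sigma_extend hF.
pose psi g := if g == h' then h else sigma g.
have psiF f : f \in F -> psi f = sigma f.
  by rewrite /psi; case: eqP => // -> h'F'; rewrite h'F' in h'F.
apply: (contains_induced_transfer (A := h' |: F) (psi := psi)); last exact: satF.
  move=> f /setU1P[-> | fF]; first by rewrite /psi eqxx setU11.
  by rewrite psiF // setU1r ?imset_f.
move=> f g /setU1P[-> | fF] /setU1P[-> | gF].
- by rewrite /psi eqxx !gle_refl.
- by rewrite (psiF g gF) /psi eqxx; case: (h'_gle g gF).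
- by rewrite (psiF f fF) /psi eqxx; case: (h'_gle f fF).
- by rewrite !psiF // sigma_gle.
Qed.

End InducedCopies.

Definition set_coord t n (i : 'I_n) (f : grid t n) (v : 'I_t) : grid t n :=
  [ffun j => if j == i then v else f j].

Definition extreme t (v : 'I_t.+1) : 'I_t.+1 := if v == ord0 then ord0 else ord_max.

Definition squash t n (i : 'I_n) (f : grid t.+1 n) : grid t.+1 n :=
  set_coord i f (extreme (f i)).

Section SetCoord.
Variables (t n : nat) (i : 'I_n).
Implicit Types f g : grid t n.

Lemma set_coord_at f v : set_coord i f v i = v.
Proof. by rewrite ffunE eqxx. Qed.

Lemma Dle_set_coordl f g v : Dle i (set_coord i f v) g = Dle i f g.
Proof. by apply: eq_forallb => j; rewrite ffunE; case: eqP. Qed.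

Lemma Dle_set_coordr f g v : Dle i f (set_coord i g v) = Dle i f g.
Proof. by apply: eq_forallb => j; rewrite ffunE; case: eqP. Qed.

End SetCoord.

Lemma extremeE t (v : 'I_t.+1) : extreme v = (if v == 0 :> nat then 0 else t) :> nat.
Proof. by case: v => [[|v] ?]. Qed.

Lemma extreme_eq0 t (v : 'I_t.+1) : (extreme v == 0 :> nat) = (v == 0 :> nat).
Proof. by rewrite extremeE; case: t v => [|t] [[|v] ?]. Qed.

Lemma leq_extreme t (a b : 'I_t.+1) : a <= b -> extreme a <= extreme b.
Proof. by rewrite !extremeE; case: a => [[|a] ?]; case: b => [[|b] ?]. Qed.

Lemma extreme_threshold (T : finType) t (L U : pred T) (v : T -> 'I_t.+1) (c : 'I_t.+1) :
  (forall l u, L l -> U u -> v l <= v u) ->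
  exists x : 'I_t.+1,
    (forall u, U u -> (c <= extreme (v u)) = (x <= v u)) /\
    (forall l, L l -> (extreme (v l) <= c) = (v l <= x)).
Proof.
move=> LU; have ct := ltn_ord c; rewrite ltnS in ct.
have [c0 | c_pos] := posnP c.
  by exists ord0; split=> [u _ | l _]; rewrite c0 ?leq0n // !leqn0 extreme_eq0.
have t_pos : 0 < t by apply: leq_trans ct.
have [ct_eq | c_lt] := eqVneq (nat_of_ord c) t.
  pose m := maxn 1 (\max_(l | L l) v l).
  have m_le : m <= t.
    by rewrite geq_max t_pos; apply/bigmax_leqP => l _; rewrite -ltnS.
  exists (inord m); rewrite inordK ?ltnS //; split=> [u Uu | l Ll].
    rewrite ct_eq extremeE geq_max; have [-> | _] := posnP (v u).
      by rewrite /= leqNgt t_pos.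
    by rewrite leqnn; apply/esym/bigmax_leqP => l Ll; exact: LU l u Ll Uu.
  rewrite ct_eq -ltnS ltn_ord /m leq_max; apply/esym/orP; right.
  exact: leq_bigmax_cond.
have {}c_lt : c < t by rewrite ltn_neqAle c_lt ct.
have [/existsP[u0 /andP[Uu0 /eqP vu0]] | no_zero] :=
  boolP [exists u, U u && (v u == 0 :> nat)].
  exists (inord 1); rewrite inordK ?ltnS //; split=> [u _ | l Ll]; rewrite extremeE.
    by have [_ | _] := posnP (v u); [rewrite leqNgt c_pos | rewrite (ltnW c_lt)].
  have /eqP -> : v l == 0 :> nat by rewrite -leqn0 -vu0 LU.
  by rewrite leq0n.
exists ord0; split=> [u Uu | l _]; rewrite extremeE.
  have /negbTE -> : v u != 0 :> nat.
    by apply: contra no_zero => vu0; apply/existsP; exists u; rewrite Uu.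
  by rewrite (ltnW c_lt).
by rewrite leqn0; have [_ | _] := posnP (v l); rewrite // leqNgt c_lt.
Qed.

Section Squash.
Variables (t n : nat) (i : 'I_n).
Implicit Types f g h : grid t.+1 n.

Lemma squash_at f : squash i f i = extreme (f i).
Proof. exact: set_coord_at. Qed.

Lemma Dle_squashl f g : Dle i (squash i f) g = Dle i f g.
Proof. exact: Dle_set_coordl. Qed.

Lemma Dle_squashr f g : Dle i f (squash i g) = Dle i f g.
Proof. exact: Dle_set_coordr. Qed.

Variable F : {set grid t.+1 n}.
Hypothesis nsep : ~ separating F i.

Lemma squash_gle : {in F &, forall f g, gle (squash i f) (squash i g) = gle f g}.
Proof.
move=> f g fF gF; rewrite !(gle_Dle i) Dle_squashl Dle_squashr !squash_at.
case fg: (Dle i f g) => //=.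
have fg_i := nonseparating_le nsep fF gF fg.
by rewrite fg_i leq_extreme.
Qed.

Lemma squash_extend h : h \notin squash i @: F ->
  exists2 h', h' \notin F &
    {in F, forall f, gle h (squash i f) = gle h' f /\ gle (squash i f) h = gle f h'}.
Proof.
move=> hF.
have [|x [above below]] := @extreme_threshold _ _ [pred f | (f \in F) && Dle i f h]
  [pred f | (f \in F) && Dle i h f] (fun f => f i) (h i).
  move=> l u /andP[lF lh] /andP[uF hu].
  exact: nonseparating_le nsep lF uF (Dle_trans lh hu).
pose h' := set_coord i h x.
have h'_gle : {in F, forall f,
    gle h (squash i f) = gle h' f /\ gle (squash i f) h = gle f h'}.
  move=> f fF; rewrite !(gle_Dle i) Dle_squashl Dle_squashr.
  rewrite Dle_set_coordl Dle_set_coordr squash_at set_coord_at.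
  split; [case hf: (Dle i h f) | case fh: (Dle i f h)] => //=.
    by apply: above; rewrite /= fF hf.
  by apply: below; rewrite /= fF fh.
exists h' => //; apply: contra hF => h'F; apply/imsetP; exists h' => //.
have [up down] := h'_gle h' h'F.
by apply: gle_anti; rewrite ?up ?down gle_refl.
Qed.

End Squash.

Theorem mainTheorem12 (d : Order.disp_t) (P : finPOrderType d) (t n : nat)
    (ht : 2 <= t) (hn : 1 <= n) (F : {set grid t n}) (i : 'I_n) :
  @induced_saturated d P t n F -> ~ @separating t n F i ->
  exists F' : {set grid t n},
    [/\ @induced_saturated d P t n F', #|F'| = #|F| &
        forall f, f \in F' -> val (f i) = 0 \/ val (f i) = t.-1].
Proof.
case: t ht F i => [// | t] _ F i satF nsep.
exists (squash i @: F); split.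
- exact: induced_saturated_imset (squash_gle nsep) (squash_extend nsep) satF.
- exact: card_imset_gle (squash_gle nsep).
move=> _ /imsetP[f _ ->]; rewrite /= squash_at extremeE.
by case: eqP; [left | right].
Qed.
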